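(* Let $r_{\mathrm c}>0$, let $w_{\mathrm c}(\lambda)=\sqrt{\lambda(\lambda-4r_{\mathrm c})}$ be the branch analytic in $|\lambda|>4r_{\mathrm c}$ with $w_{\mathrm c}(\lambda)\sim\lambda$ as $\lambda\to\infty$, and let $I\subset\mathbb{R}$ be an open interval. Let $$\mathfrak a(\bar\epsilon,x)=r_{\mathrm c}+\sum_{k\ge 1}\mathfrak a_k(x)\bar\epsilon^{k},\qquad \mathbb V(\lambda,\bar\epsilon;x)=\sum_{k\ge 0}\mathbb V^{[k]}(\lambda,x)\bar\epsilon^{k}$$ be formal power series in $\bar\epsilon$ with $\mathfrak a_k\in C^\infty(I)$, each $\mathbb V^{[k]}$ analytic in $\lambda$ for $|\lambda|>4r_{\mathrm c}$ and $C^\infty$ in $x$, and $\mathbb V^{[0]}=\lambda/w_{\mathrm c}$. Assume that, as formal power series in $\bar\epsilon$, $$\mathfrak a(\bar\epsilon,x)\big(\mathbb V(\lambda,\bar\epsilon;x)+\mathbb V(\lambda,-\bar\epsilon;x-\bar\epsilon)\big)\big(\mathbb V(\lambda,\bar\epsilon;x)+\mathbb V(\lambda,-\bar\epsilon;x+\bar\epsilon)\big)=\lambda\big(\mathbb V(\lambda,\bar\epsilon;x)^2-1\big).$$ Then the two formal series $$E_\mp(\bar\epsilon)=\lambda\,\mathbb V(\lambda,\bar\epsilon;x\mp\tfrac{\bar\epsilon}{2})-\mathfrak a(\bar\epsilon,x\mp\tfrac{\bar\epsilon}{2})\Big[\mathbb V(\lambda,\bar\epsilon;x\mp\tfrac{\bar\epsilon}{2})+\mathbb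 V(\lambda,-\bar\epsilon;x\mp\tfrac{3\bar\epsilon}{2})\Big]$$ (one with all upper signs, one with all lower signs) are even functions of $\bar\epsilon$, i.e. all coefficients of odd powers of $\bar\epsilon$ vanish.
   Context: Shifted and sign-reversed series are understood formally: for $F(\bar\epsilon;x)=\sum_kF_k(x)\bar\epsilon^k$ and constants $c$, $F(\pm\bar\epsilon;x+c\bar\epsilon)=\sum_{k,n}(\pm1)^kF_k^{(n)}(x)c^n\bar\epsilon^{k+n}/n!$; equalities of formal series mean equality of coefficients of each power of $\bar\epsilon$ (coefficients being functions of $\lambda$ and $x$). *)

From Stdlib Require Import Reals Factorial.
From Coquelicot Require Export Coquelicot.
Open Scope C_scope.

Definition in_open_int (lo hi : Rbar) (x : R) : Prop := Rbar_lt lo x /\ Rbar_lt x hi.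

Definition ext_dom (rc : R) (l : C) : Prop := (4 * rc < Cmod l)%R.

Definition holo_at (f : C -> C) (z : C) : Prop :=
  @ex_derive C_AbsRing C_NormedModule f z.

Definition lim_at_inf (f : C -> C) (L : C) : Prop :=
  forall eps : R, (0 < eps)%R ->
    exists M : R, forall l : C, (M < Cmod l)%R -> (Cmod (f l - L) < eps)%R.

Definition is_wc (rc : R) (w : C -> C) : Prop :=
  (forall l, ext_dom rc l -> w l * w l = l * (l - RtoC (4 * rc))) /\
  (forall l, ext_dom rc l -> holo_at w l) /\
  lim_at_inf (fun l => w l / l) 1.

Definition smooth_on (lo hi : Rbar) (f : R -> R) : Prop :=
  forall (n : nat) (x : R), in_open_int lo hi x -> ex_derive_n f n x.

Definition Csmooth_on (lo hi : Rbar) (f : R -> C) : Prop :=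
  smooth_on lo hi (fun t => Re (f t)) /\ smooth_on lo hi (fun t => Im (f t)).

Definition CDerive_n (f : R -> C) (n : nat) (x : R) : C :=
  (Derive_n (fun t => Re (f t)) n x, Derive_n (fun t => Im (f t)) n x).

(* Formal power series in eps whose coefficients are functions of x:
   F : nat -> R -> C, F k x = coefficient of eps^k. *)
Definition fser := nat -> R -> C.

(* F(s * eps; x + c * eps) = sum_{k,n} s^k F_k^{(n)}(x) c^n eps^{k+n} / n!. *)
Definition fshift (F : fser) (s c : R) : fser :=
  fun m x => sum_n (fun k =>
     RtoC (s ^ k) * CDerive_n (F k) (m - k) x
       * RtoC (c ^ (m - k) / INR (fact (m - k)))) m.

Definition fmul (F G : fser) : fser :=
  fun m x => sum_n (fun k => F k x * G (m - k)%nat x) m.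

Definition fadd (F G : fser) : fser := fun m x => F m x + G m x.
Definition fsub (F G : fser) : fser := fun m x => F m x - G m x.
Definition fscal (c : C) (F : fser) : fser := fun m x => c * F m x.
Definition fone : fser := fun m _ => match m with O => 1 | _ => 0 end.

From Stdlib Require Import Reals Factorial Lia Lra Wf_nat.
From Coquelicot Require Import Coquelicot.
Open Scope C_scope.
Set Bullet Behavior "Strict Subproofs".

(* Put [c = - sg / 2], [v(eps) = V(eps; x + c eps)] and [w(eps) = V(-eps; x - 3 sg eps / 2)],
   so that [E = l v - a(eps, x + c eps) (v + w)] and [v(-eps) = V(-eps; x - c eps)].
   Evaluated at [x + c eps], the hypothesis reads
   [a(eps, x + c eps) (v + w) (v + v(-eps)) = l (v^2 - 1)], hence
   [E (v + v(-eps)) = l (v v(-eps) + 1)].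
   Both [g = v + v(-eps)] and [E g] are invariant under [eps -> -eps], and [g] has the
   invertible constant term [2 V^[0] = 2 l / w_c(l)], so [E] is invariant as well. *)

(* Coquelicot's generic [sum_n] lemmas state equalities in [AbelianMonoid.sort _] and use [plus],
   which [ring] does not recognise. *)
Ltac to_R := match goal with |- @eq _ ?u ?v => change (@eq R u v) end.
Ltac to_C := match goal with |- @eq _ ?u ?v => change (@eq C u v) end; unfold plus; simpl.

Section FiniteSums.
Context {G : AbelianMonoid}.

Lemma sum_n_shift (a : nat -> G) n :
  sum_n a (S n) = plus (a 0%nat) (sum_n (fun k => a (S k)) n).
Proof.
  induction n as [|n IH].
  - now rewrite sum_Sn, !sum_O.
  - now rewrite sum_Sn, IH, sum_Sn, plus_assoc.
Qed.

Lemma sum_n_zero (a : nat -> G) n :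
  (forall k, (k <= n)%nat -> a k = zero) -> sum_n a n = zero.
Proof.
  intros Ha. induction n as [|n IH].
  - rewrite sum_O. apply Ha. lia.
  - rewrite sum_Sn, IH by (intros k Hk; apply Ha; lia).
    rewrite Ha by lia. apply plus_zero_l.
Qed.

Lemma sum_n_rev (a : nat -> G) n : sum_n a n = sum_n (fun k => a (n - k)%nat) n.
Proof.
  revert a; induction n as [|n IH]; intros a.
  - now rewrite !sum_O.
  - rewrite sum_n_shift, (IH (fun k => a (S k))), sum_Sn, Nat.sub_diag, plus_comm.
    f_equal. apply sum_n_ext_loc. intros k Hk. f_equal. lia.
Qed.

Lemma sum_n_triangle (g : nat -> nat -> G) m :
  sum_n (fun k => sum_n (fun i => g i k) k) m =
  sum_n (fun i => sum_n (fun k => g i (i + k)%nat) (m - i)) m.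
Proof.
  induction m as [|m IH].
  - now rewrite !sum_O.
  - rewrite sum_Sn, IH, (sum_Sn (fun i => sum_n _ (S m - i))), Nat.sub_diag, sum_O,
      Nat.add_0_r.
    rewrite (sum_n_ext_loc (fun i => sum_n (fun k => g i (i + k)%nat) (S m - i))
               (fun i => plus (sum_n (fun k => g i (i + k)%nat) (m - i)) (g i (S m)))).
    + now rewrite sum_n_plus, sum_Sn, !plus_assoc.
    + intros i Hi. replace (S m - i)%nat with (S (m - i)) by lia.
      rewrite sum_Sn. do 2 f_equal. lia.
Qed.

Lemma sum_n_triangle_swap (h : nat -> nat -> G) m :
  sum_n (fun j => sum_n (fun p => h j p) (m - j)) m =
  sum_n (fun p => sum_n (fun j => h j p) (m - p)) m.
Proof.
  transitivity (sum_n (fun k => sum_n (fun j => h j (k - j)%nat) k) m).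
  - rewrite (sum_n_triangle (fun j k => h j (k - j)%nat)).
    apply sum_n_ext_loc; intros j Hj; apply sum_n_ext_loc; intros p Hp.
    f_equal. lia.
  - transitivity (sum_n (fun k => sum_n (fun p => h (k - p)%nat p) k) m).
    + apply sum_n_ext_loc; intros k Hk. rewrite (sum_n_rev (fun j => h j (k - j)%nat)).
      apply sum_n_ext_loc; intros p Hp. f_equal. lia.
    + rewrite (sum_n_triangle (fun p k => h (k - p)%nat p)).
      apply sum_n_ext_loc; intros p Hp; apply sum_n_ext_loc; intros j Hj.
      f_equal. lia.
Qed.

End FiniteSums.

Lemma sum_n_Rmult_l (z : R) (a : nat -> R) n : sum_n (fun k => z * a k)%R n = (z * sum_n a n)%R.
Proof. exact (sum_n_mult_l z a n). Qed.

Lemma sum_n_Rminus (a b : nat -> R) n :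
  sum_n (fun k => a k - b k)%R n = (sum_n a n - sum_n b n)%R.
Proof.
  induction n as [|n IH]; [now rewrite !sum_O |].
  rewrite !sum_Sn, IH. change (plus ?u ?v) with (u + v)%R. to_R; ring.
Qed.

Lemma RtoC_sum_n (a : nat -> R) n : RtoC (sum_n a n) = sum_n (fun k => RtoC (a k)) n.
Proof.
  induction n as [|n IH]; [now rewrite !sum_O |].
  rewrite !sum_Sn, <- IH. apply RtoC_plus.
Qed.

Lemma sum_n_binomial_fact (x y : R) n :
  sum_n (fun j => x ^ j / INR (fact j) * (y ^ (n - j) / INR (fact (n - j))))%R n
  = ((x + y) ^ n / INR (fact n))%R.
Proof.
  rewrite binomial, <- sum_n_Reals. unfold Rdiv. rewrite Rmult_comm, <- sum_n_Rmult_l.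
  apply sum_n_ext_loc. intros j Hj. unfold Binomial.C. to_R; field.
  repeat split; apply not_0_INR, fact_neq_0.
Qed.

Lemma sum_n_Cplus (a b : nat -> C) n :
  sum_n (fun k => a k + b k) n = sum_n a n + sum_n b n.
Proof. exact (sum_n_plus a b n). Qed.

Lemma sum_n_Cmult_l (z : C) (a : nat -> C) n : sum_n (fun k => z * a k) n = z * sum_n a n.
Proof. exact (sum_n_mult_l z a n). Qed.

Lemma sum_n_Cmult_r (z : C) (a : nat -> C) n : sum_n (fun k => a k * z) n = sum_n a n * z.
Proof. exact (sum_n_mult_r z a n). Qed.

Lemma sum_n_Cminus (a b : nat -> C) n :
  sum_n (fun k => a k - b k) n = sum_n a n - sum_n b n.
Proof.
  induction n as [|n IH].
  - now rewrite !sum_O.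
  - rewrite !sum_Sn, IH. to_C; ring.
Qed.

Lemma C_eq (a b : C) : Re a = Re b -> Im a = Im b -> a = b.
Proof. intros; now apply injective_projections. Qed.

Lemma Re_sum_n (a : nat -> C) n : Re (sum_n a n) = sum_n (fun k => Re (a k)) n.
Proof.
  induction n as [|n IH]; [now rewrite !sum_O |].
  rewrite !sum_Sn, <- IH. reflexivity.
Qed.

Lemma Im_sum_n (a : nat -> C) n : Im (sum_n a n) = sum_n (fun k => Im (a k)) n.
Proof.
  induction n as [|n IH]; [now rewrite !sum_O |].
  rewrite !sum_Sn, <- IH. reflexivity.
Qed.

Lemma Cmult_eq_reg_r (g a b : C) : a * g = b * g -> g <> 0 -> a = b.
Proof. intros H Hg. replace a with (a * g / g) by (field; auto). rewrite H. field; auto. Qed.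

Lemma Cplus_eq_reg_l (u a b : C) : u + a = u + b -> a = b.
Proof. intros H. replace a with (u + a - u) by ring. rewrite H. ring. Qed.

(** * Cauchy products *)

Definition cauchy (a b : nat -> C) (m : nat) : C := sum_n (fun k => a k * b (m - k)%nat) m.

Lemma fmul_cauchy (F G : fser) m x :
  fmul F G m x = cauchy (fun k => F k x) (fun k => G k x) m.
Proof. reflexivity. Qed.

Lemma cauchy_ext (a a' b b' : nat -> C) m :
  (forall k, (k <= m)%nat -> a k = a' k) -> (forall k, (k <= m)%nat -> b k = b' k) ->
  cauchy a b m = cauchy a' b' m.
Proof.
  intros Ha Hb. apply sum_n_ext_loc; intros k Hk. rewrite Ha, Hb by lia. reflexivity.
Qed.

Lemma cauchy_comm (a b : nat -> C) m : cauchy a b m = cauchy b a m.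
Proof.
  unfold cauchy. rewrite (sum_n_rev (fun k => a k * b (m - k)%nat)).
  apply sum_n_ext_loc; intros k Hk. replace (m - (m - k))%nat with k by lia.
  apply Cmult_comm.
Qed.

Lemma cauchy_assoc (a b c : nat -> C) m : cauchy (cauchy a b) c m = cauchy a (cauchy b c) m.
Proof.
  unfold cauchy.
  rewrite (sum_n_ext_loc _ (fun k => sum_n (fun i => a i * b (k - i)%nat * c (m - k)%nat) k))
    by (intros; symmetry; apply sum_n_Cmult_r).
  rewrite (sum_n_triangle (fun i k => a i * b (k - i)%nat * c (m - k)%nat)).
  apply sum_n_ext_loc; intros i Hi. rewrite <- sum_n_Cmult_l.
  apply sum_n_ext_loc; intros j Hj.
  replace (i + j - i)%nat with j by lia.
  replace (m - (i + j))%nat with (m - i - j)%nat by lia.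
  symmetry. apply Cmult_assoc.
Qed.

Lemma cauchy_addl (a b c : nat -> C) m :
  cauchy (fun k => a k + b k) c m = cauchy a c m + cauchy b c m.
Proof.
  unfold cauchy. rewrite <- sum_n_Cplus. apply sum_n_ext; intros k. apply Cmult_plus_distr_r.
Qed.

Lemma cauchy_addr (a b c : nat -> C) m :
  cauchy a (fun k => b k + c k) m = cauchy a b m + cauchy a c m.
Proof. rewrite !(cauchy_comm a). apply cauchy_addl. Qed.

Lemma cauchy_subl (a b c : nat -> C) m :
  cauchy (fun k => a k - b k) c m = cauchy a c m - cauchy b c m.
Proof. unfold cauchy. rewrite <- sum_n_Cminus. apply sum_n_ext; intros k. to_C; ring. Qed.

Lemma cauchy_scall (z : C) (a c : nat -> C) m : cauchy (fun k => z * a k) c m = z * cauchy a c m.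
Proof.
  unfold cauchy. rewrite <- sum_n_Cmult_l. apply sum_n_ext; intros k. symmetry; apply Cmult_assoc.
Qed.

Lemma cauchy_cancelr (a b g : nat -> C) :
  g 0%nat <> 0 -> (forall m, cauchy a g m = cauchy b g m) -> forall m, a m = b m.
Proof.
  intros Hg H m. induction m as [m IH] using lt_wf_ind.
  specialize (H m). unfold cauchy in H. destruct m as [|m].
  - rewrite !sum_O, Nat.sub_0_r in H. exact (Cmult_eq_reg_r _ _ _ H Hg).
  - rewrite !sum_Sn, Nat.sub_diag in H.
    rewrite (sum_n_ext_loc (fun k => a k * g (S m - k)%nat) (fun k => b k * g (S m - k)%nat))
      in H by (intros k Hk; rewrite IH by lia; reflexivity).
    exact (Cmult_eq_reg_r _ _ _ (Cplus_eq_reg_l _ _ _ H) Hg).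
Qed.

Definition diag_sum (u : nat -> nat -> C) (m : nat) : C := sum_n (fun k => u k (m - k)%nat) m.

Lemma diag_sum_ext (u v : nat -> nat -> C) m :
  (forall k, (k <= m)%nat -> u k (m - k)%nat = v k (m - k)%nat) -> diag_sum u m = diag_sum v m.
Proof. intros H. now apply sum_n_ext_loc. Qed.

(* The double sequence [w k n = sum_(i <= k, p <= n) u i p * v (k - i) (n - p)] is the
   product of [u] and [v] as series in two variables; [diag_sum] evaluates it on the diagonal. *)
Lemma diag_sum_mult (u v : nat -> nat -> C) m :
  diag_sum (fun k n => sum_n (fun i => sum_n (fun p => u i p * v (k - i)%nat (n - p)%nat) n) k) m
  = cauchy (diag_sum u) (diag_sum v) m.
Proof.
  unfold diag_sum, cauchy.
  rewrite (sum_n_triangle (fun i k => sum_n (fun p => u i p * v (k - i)%nat (m - k - p)%nat) (m - k))).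
  rewrite (sum_n_ext_loc (fun k => sum_n (fun i => u i (k - i)%nat) k * _)
     (fun k => sum_n (fun i => u i (k - i)%nat * sum_n (fun j => v j (m - k - j)%nat) (m - k)) k))
    by (intros; symmetry; apply sum_n_Cmult_r).
  rewrite (sum_n_triangle (fun i k => u i (k - i)%nat * sum_n (fun j => v j (m - k - j)%nat) (m - k))).
  apply sum_n_ext_loc; intros i Hi.
  rewrite (sum_n_ext_loc
    (fun k => u i (i + k - i)%nat * sum_n (fun j => v j (m - (i + k) - j)%nat) (m - (i + k)))
    (fun p => sum_n (fun j => u i p * v j (m - i - p - j)%nat) (m - i - p))).
  2:{ intros p Hp. rewrite <- sum_n_Cmult_l. replace (i + p - i)%nat with p by lia.
      now replace (m - (i + p))%nat with (m - i - p)%nat by lia. }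
  rewrite <- sum_n_triangle_swap. apply sum_n_ext_loc; intros j Hj.
  replace (m - (i + j))%nat with (m - i - j)%nat by lia.
  apply sum_n_ext_loc; intros p Hp. do 2 f_equal; lia.
Qed.

(** * Alternating signs *)

Definition one_seq (m : nat) : C := match m with O => 1 | _ => 0 end.

Definition alt (a : nat -> C) (k : nat) : C := RtoC ((-1) ^ k) * a k.

Lemma alt_alt (a : nat -> C) k : alt (alt a) k = a k.
Proof.
  unfold alt. rewrite Cmult_assoc, <- RtoC_mult, <- Rpow_mult_distr.
  replace (-1 * -1)%R with 1%R by ring. rewrite pow1. ring.
Qed.

Lemma alt_one_seq m : alt one_seq m = one_seq m.
Proof. destruct m; unfold alt, one_seq; simpl; ring. Qed.

Lemma cauchy_alt (a b : nat -> C) m : alt (cauchy a b) m = cauchy (alt a) (alt b) m.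
Proof.
  unfold alt, cauchy. rewrite <- sum_n_Cmult_l. apply sum_n_ext_loc; intros k Hk.
  replace ((-1) ^ m)%R with ((-1) ^ k * (-1) ^ (m - k))%R
    by (rewrite <- pow_add; f_equal; lia).
  rewrite RtoC_mult. to_C; ring.
Qed.

Lemma alt_fixed_odd (a : nat -> C) m : alt a m = a m -> Nat.odd m = true -> a m = 0.
Proof.
  unfold alt. intros Hm Hodd. apply Nat.odd_spec in Hodd as [j ->].
  rewrite Nat.add_1_r in *. rewrite pow_1_odd in Hm.
  replace (a (S (2 * j))) with (/ 2 * (a (S (2 * j)) - RtoC (-1) * a (S (2 * j))))
    by (field; intros H2; apply RtoC_inj in H2; lra).
  rewrite Hm. ring.
Qed.

(* Multiplying [e] by [g = v + alt v] gives [l (v * alt v + 1)], which is visibly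
   invariant under [alt]; so is [g], and [g] is invertible. *)
Lemma alt_fixed_of_relation (l : C) (a v w : nat -> C) :
  v 0%nat + v 0%nat <> 0 ->
  (forall m, cauchy a (cauchy (fun k => v k + w k) (fun k => v k + alt v k)) m
             = l * (cauchy v v m - one_seq m)) ->
  let e := fun m => l * v m - cauchy a (fun k => v k + w k) m in
  forall m, alt e m = e m.
Proof.
  intros Hv0 Hrel e.
  set (g := fun k => v k + alt v k).
  assert (Heg : forall m, cauchy e g m = l * (cauchy v (alt v) m + one_seq m)).
  { intros m. unfold e. rewrite cauchy_subl, cauchy_scall, cauchy_assoc, Hrel.
    unfold g. rewrite cauchy_addr. ring. }
  assert (Hg : forall k, alt g k = g k).
  { intros k. transitivity (alt v k + alt (alt v) k); [unfold g, alt; ring |].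
    rewrite alt_alt. apply Cplus_comm. }
  apply (cauchy_cancelr _ _ g).
  - unfold g, alt. simpl. rewrite Cmult_1_l. exact Hv0.
  - intros m. rewrite (cauchy_ext (alt e) (alt e) g (alt g)) by (intros; auto).
    assert (Hva : alt (cauchy v (alt v)) m = cauchy v (alt v) m).
    { rewrite cauchy_alt, cauchy_comm. apply cauchy_ext; auto using alt_alt. }
    rewrite <- cauchy_alt. unfold alt at 1. rewrite Heg.
    rewrite <- Hva at 2. rewrite <- (alt_one_seq m) at 2. unfold alt. ring.
Qed.

(** * Smoothness on an open interval *)

Section RealSmooth.
Local Open Scope R_scope.
Variables lo hi : Rbar.
Local Notation inI := (in_open_int lo hi).
Local Notation smooth := (smooth_on lo hi).

Lemma in_open_int_locally x : inI x -> locally x inI.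
Proof.
  intros Hx.
  assert (Ho : @open R_UniformSpace (fun u : R => Rbar_lt lo u /\ Rbar_lt u hi)).
  { apply open_and; [apply open_Rbar_gt | apply open_Rbar_lt]. }
  exact (Ho x Hx).
Qed.

Lemma smooth_on_locally f x n :
  smooth f -> inI x -> locally x (fun y => forall k, (k <= n)%nat -> ex_derive_n f k y).
Proof.
  intros Hf Hx. apply (filter_imp inI); [|now apply in_open_int_locally].
  intros y Hy k _. now apply Hf.
Qed.

Lemma eq_on_locally (f g : R -> R) x :
  (forall t, inI t -> f t = g t) -> inI x -> locally x (fun t => f t = g t).
Proof. intros H Hx. apply (filter_imp inI); [exact H | now apply in_open_int_locally]. Qed.

Lemma smooth_on_ext f g : (forall t, inI t -> f t = g t) -> smooth f -> smooth g.
Proof.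
  intros H Hf n x Hx. apply (ex_derive_n_ext_loc f g); [now apply eq_on_locally | now apply Hf].
Qed.

Lemma Derive_n_ext_on f g n x :
  (forall t, inI t -> f t = g t) -> inI x -> Derive_n f n x = Derive_n g n x.
Proof. intros H Hx. apply Derive_n_ext_loc. now apply eq_on_locally. Qed.

Lemma smooth_on_const c : smooth (fun _ => c).
Proof. intros n x _. apply ex_derive_n_const. Qed.

Lemma smooth_on_plus f g : smooth f -> smooth g -> smooth (fun t => f t + g t).
Proof. intros Hf Hg n x Hx. apply ex_derive_n_plus; now apply smooth_on_locally. Qed.

Lemma smooth_on_minus f g : smooth f -> smooth g -> smooth (fun t => f t - g t).
Proof. intros Hf Hg n x Hx. apply ex_derive_n_minus; now apply smooth_on_locally. Qed.

Lemma smooth_on_scal c f : smooth f -> smooth (fun t => c * f t).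
Proof. intros Hf n x Hx. apply ex_derive_n_scal_l; auto. Qed.

Lemma smooth_on_sum_n f N : (forall i, smooth (f i)) -> smooth (fun t => sum_n (fun i => f i t) N).
Proof.
  intros Hf n x Hx. apply ex_derive_n_sum_n.
  apply (filter_imp inI); [intros y Hy l j _ _; now apply Hf | now apply in_open_int_locally].
Qed.

Lemma Derive_n_Derive f n t : Derive_n (Derive f) n t = Derive_n f (S n) t.
Proof. rewrite <- Nat.add_1_r, <- Derive_n_comp. reflexivity. Qed.

Lemma smooth_on_Derive_n f j : smooth f -> smooth (Derive_n f j).
Proof.
  intros Hf [|n] x Hx; [exact I |].
  apply (ex_derive_ext (Derive_n f (n + j))); [intros t; now rewrite Derive_n_comp |].
  exact (Hf (S (n + j)) x Hx).
Qed.

Lemma smooth_on_Derive f : smooth f -> smooth (Derive f).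
Proof. exact (smooth_on_Derive_n f 1). Qed.

Lemma Derive_n_plus_on f g n x : smooth f -> smooth g -> inI x ->
  Derive_n (fun t => f t + g t) n x = Derive_n f n x + Derive_n g n x.
Proof. intros; apply Derive_n_plus; now apply smooth_on_locally. Qed.

Lemma Derive_n_minus_on f g n x : smooth f -> smooth g -> inI x ->
  Derive_n (fun t => f t - g t) n x = Derive_n f n x - Derive_n g n x.
Proof. intros; apply Derive_n_minus; now apply smooth_on_locally. Qed.

Lemma Derive_mult_on f g x : smooth f -> smooth g -> inI x ->
  Derive (fun t => f t * g t) x = Derive f x * g x + f x * Derive g x.
Proof. intros Hf Hg Hx. apply Derive_mult; [apply (Hf 1%nat) | apply (Hg 1%nat)]; auto. Qed.

Lemma ex_derive_n_S_Derive h n x :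
  ex_derive h x -> ex_derive_n (Derive h) n x -> ex_derive_n h (S n) x.
Proof.
  intros H1 H2. destruct n as [|n]; [exact H1 |].
  apply (ex_derive_ext (Derive_n (Derive h) n)); [apply Derive_n_Derive | exact H2].
Qed.

Lemma smooth_on_mult f g : smooth f -> smooth g -> smooth (fun t => f t * g t).
Proof.
  enough (H : forall n f g, smooth f -> smooth g -> forall x, inI x ->
                forall k, (k <= n)%nat -> ex_derive_n (fun t => f t * g t) k x).
  { intros Hf Hg n x Hx. eapply H; eauto. }
  clear f g. induction n as [|n IH]; intros f g Hf Hg x Hx [|k] Hk; try exact I; [lia |].
  apply ex_derive_n_S_Derive.
  - apply ex_derive_mult; [apply (Hf 1%nat) | apply (Hg 1%nat)]; auto.
  - apply (ex_derive_n_ext_loc (fun t => Derive f t * g t + f t * Derive g t)).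
    + apply (filter_imp inI); [|now apply in_open_int_locally].
      intros t Ht. symmetry. now apply Derive_mult_on.
    + apply ex_derive_n_plus; (apply (filter_imp inI); [|now apply in_open_int_locally]);
        intros y Hy k' Hk'; apply IH; auto using smooth_on_Derive; lia.
Qed.

Definition taylor_coeff (f : R -> R) n x := Derive_n f n x / INR (fact n).

Lemma taylor_coeff_Derive f k x : taylor_coeff (Derive f) k x = INR (S k) * taylor_coeff f (S k) x.
Proof.
  unfold taylor_coeff. rewrite Derive_n_Derive, fact_simpl, mult_INR.
  field. split; apply not_0_INR; [apply fact_neq_0 | lia].
Qed.

Lemma taylor_coeff_mult n : forall f g x, smooth f -> smooth g -> inI x ->
  taylor_coeff (fun t => f t * g t) n x
  = sum_n (fun k => taylor_coeff f k x * taylor_coeff g (n - k) x) n.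
Proof.
  induction n as [|n IH]; intros f g x Hf Hg Hx.
  - rewrite sum_O. unfold taylor_coeff. simpl. field.
  - unfold taylor_coeff at 1. rewrite <- Derive_n_Derive.
    rewrite (Derive_n_ext_on _ (fun t => Derive f t * g t + f t * Derive g t)) by
      (auto; intros; now apply Derive_mult_on).
    rewrite Derive_n_plus_on by (auto; apply smooth_on_mult; auto using smooth_on_Derive).
    rewrite fact_simpl, mult_INR.
    replace ((Derive_n (fun t => Derive f t * g t) n x + Derive_n (fun t => f t * Derive g t) n x) /
       (INR (S n) * INR (fact n))) with
      ((taylor_coeff (fun t => Derive f t * g t) n x + taylor_coeff (fun t => f t * Derive g t) n x) / INR (S n))
      by (unfold taylor_coeff; field; split; apply not_0_INR; [apply fact_neq_0 | lia]).
    rewrite !IH by auto using smooth_on_Derive.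
    set (a := fun k => taylor_coeff f k x * taylor_coeff g (S n - k) x).
    assert (E1 : sum_n (fun k => taylor_coeff (Derive f) k x * taylor_coeff g (n - k) x) n =
                 sum_n (fun k => INR k * a k) (S n)).
    { rewrite sum_n_shift. simpl INR at 1.
      rewrite Rmult_0_l. change (plus ?u ?v) with (u + v). rewrite Rplus_0_l.
      apply sum_n_ext. intros k. rewrite taylor_coeff_Derive. unfold a.
      simpl (S n - S k)%nat. cbv beta. to_R; ring. }
    assert (E2 : sum_n (fun k => taylor_coeff f k x * taylor_coeff (Derive g) (n - k) x) n =
                 sum_n (fun k => INR (S n - k) * a k) (S n)).
    { rewrite sum_Sn, Nat.sub_diag. simpl INR at 2.
      rewrite Rmult_0_l. change (plus ?u ?v) with (u + v). rewrite Rplus_0_r.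
      apply sum_n_ext_loc. intros k Hk. rewrite taylor_coeff_Derive. unfold a.
      replace (S (n - k)) with (S n - k)%nat by lia. to_R; ring. }
    rewrite E1, E2. rewrite <- (sum_n_plus (G := R_AbelianMonoid)).
    rewrite (sum_n_ext_loc _ (fun k => INR (S n) * a k)).
    + rewrite sum_n_Rmult_l. field. apply not_0_INR; lia.
    + intros k Hk. rewrite minus_INR by lia. change (plus ?u ?v) with (u + v). to_R; ring.
Qed.

End RealSmooth.

Section ComplexSmooth.
Variables lo hi : Rbar.
Local Notation inI := (in_open_int lo hi).
Local Notation smooth := (smooth_on lo hi).
Local Notation Csmooth := (Csmooth_on lo hi).

Definition ctaylor_coeff (f : R -> C) n x : C :=
  (taylor_coeff (fun t => Re (f t)) n x, taylor_coeff (fun t => Im (f t)) n x).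

Lemma CDerive_n_div_fact f n x :
  CDerive_n f n x * RtoC (/ INR (fact n)) = ctaylor_coeff f n x.
Proof.
  apply C_eq; unfold CDerive_n, ctaylor_coeff, taylor_coeff; simpl; field;
    apply not_0_INR, fact_neq_0.
Qed.

Lemma CDerive_n_O f x : CDerive_n f 0 x = f x.
Proof. now apply C_eq. Qed.

Lemma CDerive_n_ext_on f g n x :
  (forall t, inI t -> f t = g t) -> inI x -> CDerive_n f n x = CDerive_n g n x.
Proof.
  intros H Hx. unfold CDerive_n.
  f_equal; apply (Derive_n_ext_on lo hi); auto; intros t Ht; now rewrite H.
Qed.

Lemma CDerive_n_comp f n j x :
  CDerive_n (fun t => CDerive_n f j t) n x = CDerive_n f (n + j) x.
Proof. apply C_eq; simpl; now rewrite <- Derive_n_comp. Qed.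

Lemma CDerive_n_const (z : C) n x :
  CDerive_n (fun _ => z) n x = match n with O => z | _ => 0 end.
Proof. destruct n; apply C_eq; simpl; auto; apply Derive_n_const. Qed.

Lemma Csmooth_on_const (z : C) : Csmooth (fun _ => z).
Proof. split; apply smooth_on_const. Qed.

Lemma Csmooth_on_plus f g : Csmooth f -> Csmooth g -> Csmooth (fun t => f t + g t).
Proof. intros [F1 F2] [G1 G2]. split; now apply smooth_on_plus. Qed.

Lemma Csmooth_on_minus f g : Csmooth f -> Csmooth g -> Csmooth (fun t => f t - g t).
Proof.
  intros [F1 F2] [G1 G2].
  split; [exact (smooth_on_minus _ _ _ _ F1 G1) | exact (smooth_on_minus _ _ _ _ F2 G2)].
Qed.

Lemma Csmooth_on_mult f g : Csmooth f -> Csmooth g -> Csmooth (fun t => f t * g t).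
Proof.
  intros [F1 F2] [G1 G2]. split.
  - apply smooth_on_minus; now apply smooth_on_mult.
  - apply smooth_on_plus; now apply smooth_on_mult.
Qed.

Lemma Csmooth_on_scal (z : C) f : Csmooth f -> Csmooth (fun t => z * f t).
Proof. intros Hf. apply Csmooth_on_mult; [apply Csmooth_on_const | exact Hf]. Qed.

Lemma Csmooth_on_sum_n (F : nat -> R -> C) N :
  (forall i, Csmooth (F i)) -> Csmooth (fun t => sum_n (fun i => F i t) N).
Proof.
  intros H. split.
  - apply (smooth_on_ext lo hi (fun t => sum_n (fun i => Re (F i t)) N));
      [intros; now rewrite Re_sum_n |].
    apply smooth_on_sum_n. intros i; exact (proj1 (H i)).
  - apply (smooth_on_ext lo hi (fun t => sum_n (fun i => Im (F i t)) N));
      [intros; now rewrite Im_sum_n |].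
    apply smooth_on_sum_n. intros i; exact (proj2 (H i)).
Qed.

Lemma Csmooth_on_CDerive_n f j : Csmooth f -> Csmooth (fun t => CDerive_n f j t).
Proof. intros [F1 F2]. split; now apply smooth_on_Derive_n. Qed.

Lemma CDerive_n_plus f g n x : Csmooth f -> Csmooth g -> inI x ->
  CDerive_n (fun t => f t + g t) n x = CDerive_n f n x + CDerive_n g n x.
Proof.
  intros [F1 F2] [G1 G2] Hx.
  apply C_eq; simpl;
    [exact (Derive_n_plus_on _ _ _ _ _ _ F1 G1 Hx) | exact (Derive_n_plus_on _ _ _ _ _ _ F2 G2 Hx)].
Qed.

Lemma CDerive_n_minus f g n x : Csmooth f -> Csmooth g -> inI x ->
  CDerive_n (fun t => f t - g t) n x = CDerive_n f n x - CDerive_n g n x.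
Proof.
  intros [F1 F2] [G1 G2] Hx.
  apply C_eq; simpl;
    [exact (Derive_n_minus_on _ _ _ _ _ _ F1 G1 Hx) | exact (Derive_n_minus_on _ _ _ _ _ _ F2 G2 Hx)].
Qed.

Lemma CDerive_n_scal (z : C) f n x : Csmooth f -> inI x ->
  CDerive_n (fun t => z * f t) n x = z * CDerive_n f n x.
Proof.
  intros [F1 F2] Hx. destruct z as [zr zi]. apply C_eq.
  - change (Derive_n (fun t => zr * Re (f t) - zi * Im (f t))%R n x
            = zr * Derive_n (fun t => Re (f t)) n x - zi * Derive_n (fun t => Im (f t)) n x)%R.
    rewrite (Derive_n_minus_on lo hi) by (try apply smooth_on_scal; auto).
    now rewrite !Derive_n_scal_l.
  - change (Derive_n (fun t => zr * Im (f t) + zi * Re (f t))%R n x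
            = zr * Derive_n (fun t => Im (f t)) n x + zi * Derive_n (fun t => Re (f t)) n x)%R.
    rewrite (Derive_n_plus_on lo hi) by (try apply smooth_on_scal; auto).
    now rewrite !Derive_n_scal_l.
Qed.

Lemma CDerive_n_sum_n (F : nat -> R -> C) N n x : (forall i, Csmooth (F i)) -> inI x ->
  CDerive_n (fun t => sum_n (fun i => F i t) N) n x = sum_n (fun i => CDerive_n (F i) n x) N.
Proof.
  intros H Hx. induction N as [|N IH].
  - rewrite sum_O. apply CDerive_n_ext_on; auto. intros; now rewrite sum_O.
  - rewrite sum_Sn, <- IH.
    rewrite (CDerive_n_ext_on _ (fun t => sum_n (fun i => F i t) N + F (S N) t)) by
      (auto; intros t _; exact (sum_Sn _ _)).
    apply CDerive_n_plus; auto. now apply Csmooth_on_sum_n.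
Qed.

Lemma ctaylor_coeff_sum_n (F : nat -> R -> C) N n x : (forall i, Csmooth (F i)) -> inI x ->
  ctaylor_coeff (fun t => sum_n (fun i => F i t) N) n x
  = sum_n (fun i => ctaylor_coeff (F i) n x) N.
Proof.
  intros HF Hx. rewrite <- CDerive_n_div_fact, CDerive_n_sum_n, <- sum_n_Cmult_r by auto.
  apply sum_n_ext; intros. apply CDerive_n_div_fact.
Qed.

Lemma ctaylor_coeff_mult f g n x : Csmooth f -> Csmooth g -> inI x ->
  ctaylor_coeff (fun t => f t * g t) n x
  = sum_n (fun k => ctaylor_coeff f k x * ctaylor_coeff g (n - k) x) n.
Proof.
  intros [F1 F2] [G1 G2] Hx. apply C_eq; rewrite ?Re_sum_n, ?Im_sum_n.
  - change (taylor_coeff (fun t => Re (f t) * Re (g t) - Im (f t) * Im (g t))%R n x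
      = sum_n (fun k => taylor_coeff (fun t => Re (f t)) k x * taylor_coeff (fun t => Re (g t)) (n - k) x
          - taylor_coeff (fun t => Im (f t)) k x * taylor_coeff (fun t => Im (g t)) (n - k) x)%R n).
    transitivity (taylor_coeff (fun t => Re (f t) * Re (g t)) n x
                  - taylor_coeff (fun t => Im (f t) * Im (g t)) n x)%R.
    { unfold taylor_coeff. rewrite (Derive_n_minus_on lo hi) by (try apply smooth_on_mult; auto).
      field. apply not_0_INR, fact_neq_0. }
    rewrite !(taylor_coeff_mult lo hi) by auto. symmetry. apply sum_n_Rminus.
  - change (taylor_coeff (fun t => Re (f t) * Im (g t) + Im (f t) * Re (g t))%R n x
      = sum_n (fun k => taylor_coeff (fun t => Re (f t)) k x * taylor_coeff (fun t => Im (g t)) (n - k) x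
          + taylor_coeff (fun t => Im (f t)) k x * taylor_coeff (fun t => Re (g t)) (n - k) x)%R n).
    transitivity (taylor_coeff (fun t => Re (f t) * Im (g t)) n x
                  + taylor_coeff (fun t => Im (f t) * Re (g t)) n x)%R.
    { unfold taylor_coeff. rewrite (Derive_n_plus_on lo hi) by (try apply smooth_on_mult; auto).
      field. apply not_0_INR, fact_neq_0. }
    rewrite !(taylor_coeff_mult lo hi) by auto. symmetry. exact (sum_n_plus _ _ _).
Qed.

Lemma Csmooth_on_RtoC f : smooth f -> Csmooth (fun t => RtoC (f t)).
Proof. intros Hf. split; [exact Hf | exact (smooth_on_const lo hi 0)]. Qed.

End ComplexSmooth.

(** * Formal shifts *)

Section FormalShift.
Variables lo hi : Rbar.
Local Notation inI := (in_open_int lo hi).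
Local Notation Csmooth := (Csmooth_on lo hi).

Definition fser_smooth (F : fser) : Prop := forall k, Csmooth (F k).

Lemma fser_smooth_fadd F G : fser_smooth F -> fser_smooth G -> fser_smooth (fadd F G).
Proof. intros HF HG k. now apply Csmooth_on_plus. Qed.

Lemma fser_smooth_fsub F G : fser_smooth F -> fser_smooth G -> fser_smooth (fsub F G).
Proof. intros HF HG k. now apply Csmooth_on_minus. Qed.

Lemma fser_smooth_fmul F G : fser_smooth F -> fser_smooth G -> fser_smooth (fmul F G).
Proof. intros HF HG k. apply Csmooth_on_sum_n. intros i. now apply Csmooth_on_mult. Qed.

Lemma fser_smooth_fone : fser_smooth fone.
Proof. intros k. apply Csmooth_on_const. Qed.

Lemma fser_smooth_fshift F s c : fser_smooth F -> fser_smooth (fshift F s c).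
Proof.
  intros HF k. apply Csmooth_on_sum_n. intros i.
  apply Csmooth_on_mult; [apply Csmooth_on_scal, Csmooth_on_CDerive_n, HF | apply Csmooth_on_const].
Qed.

Lemma fshift_taylor F s c m x :
  fshift F s c m x = diag_sum (fun k n => RtoC (s ^ k * c ^ n) * ctaylor_coeff (F k) n x) m.
Proof.
  apply sum_n_ext_loc; intros k Hk. rewrite <- CDerive_n_div_fact.
  unfold Rdiv. rewrite !RtoC_mult. to_C; ring.
Qed.

Lemma fshift_O F s c x : fshift F s c 0%nat x = F 0%nat x.
Proof. unfold fshift. rewrite sum_O, CDerive_n_O. simpl. unfold Rdiv. rewrite Rinv_1, Rmult_1_l. ring. Qed.

Lemma fshift_ext_on F G s c m x : (forall t, inI t -> forall k, F k t = G k t) -> inI x ->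
  fshift F s c m x = fshift G s c m x.
Proof.
  intros H Hx. apply sum_n_ext_loc; intros k Hk. do 2 f_equal. apply (CDerive_n_ext_on lo hi); auto.
Qed.

Lemma fshift_fadd F G s c m x : fser_smooth F -> fser_smooth G -> inI x ->
  fshift (fadd F G) s c m x = fshift F s c m x + fshift G s c m x.
Proof.
  intros HF HG Hx. unfold fshift, fadd. rewrite <- sum_n_Cplus. apply sum_n_ext_loc; intros k Hk.
  rewrite (CDerive_n_plus lo hi) by auto. to_C; ring.
Qed.

Lemma fshift_fsub F G s c m x : fser_smooth F -> fser_smooth G -> inI x ->
  fshift (fsub F G) s c m x = fshift F s c m x - fshift G s c m x.
Proof.
  intros HF HG Hx. unfold fshift, fsub. rewrite <- sum_n_Cminus. apply sum_n_ext_loc; intros k Hk.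
  rewrite (CDerive_n_minus lo hi) by auto. to_C; ring.
Qed.

Lemma fshift_fscal z F s c m x : fser_smooth F -> inI x ->
  fshift (fscal z F) s c m x = z * fshift F s c m x.
Proof.
  intros HF Hx. unfold fshift, fscal. rewrite <- sum_n_Cmult_l. apply sum_n_ext_loc; intros k Hk.
  rewrite (CDerive_n_scal lo hi) by auto. to_C; ring.
Qed.

Lemma fshift_fone s c m x : fshift fone s c m x = fone m x.
Proof.
  destruct m as [|m]; [rewrite fshift_O; reflexivity |].
  unfold fshift. rewrite sum_Sn, Nat.sub_diag, CDerive_n_O, sum_n_zero.
  - change (0 + RtoC (s ^ S m) * 0 * RtoC (c ^ 0 / INR (fact 0)) = 0). ring.
  - intros k Hk. replace (S m - k)%nat with (S (m - k)) by lia.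
    unfold fone. rewrite CDerive_n_const, Cmult_0_r, Cmult_0_l. reflexivity.
Qed.

Lemma fshift_fmul F G s c m x : fser_smooth F -> fser_smooth G -> inI x ->
  fshift (fmul F G) s c m x = fmul (fshift F s c) (fshift G s c) m x.
Proof.
  intros HF HG Hx.
  set (u := fun k n => RtoC (s ^ k * c ^ n) * ctaylor_coeff (F k) n x).
  set (v := fun k n => RtoC (s ^ k * c ^ n) * ctaylor_coeff (G k) n x).
  transitivity (cauchy (diag_sum u) (diag_sum v) m).
  - rewrite fshift_taylor, <- diag_sum_mult. apply diag_sum_ext; intros k Hk.
    unfold fmul. rewrite (ctaylor_coeff_sum_n lo hi) by (auto; intros; now apply Csmooth_on_mult).
    rewrite <- sum_n_Cmult_l. apply sum_n_ext_loc; intros i Hi.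
    rewrite (ctaylor_coeff_mult lo hi), <- sum_n_Cmult_l by auto.
    apply sum_n_ext_loc; intros p Hp. unfold u, v.
    replace (s ^ k)%R with (s ^ i * s ^ (k - i))%R by (rewrite <- pow_add; f_equal; lia).
    replace (c ^ (m - k))%R with (c ^ p * c ^ (m - k - p))%R by (rewrite <- pow_add; f_equal; lia).
    rewrite !RtoC_mult. to_C; ring.
  - rewrite fmul_cauchy. apply cauchy_ext; intros; now rewrite fshift_taylor.
Qed.

(* Shifting by [c1 eps] and then by [c2 eps] shifts by [(c1 + c2) eps]: the iterated
   [x]-derivatives recombine by the binomial theorem. *)
Lemma fshift_fshift F s c1 c2 m x : fser_smooth F -> inI x ->
  fshift (fshift F s c1) 1 c2 m x = fshift F s (c1 + c2) m x.
Proof.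
  intros HF Hx. unfold fshift at 1.
  rewrite (sum_n_ext_loc _ (fun k => sum_n (fun i =>
      RtoC (s ^ i) * CDerive_n (F i) (m - k + (k - i)) x *
      RtoC (c1 ^ (k - i) / INR (fact (k - i)) * (c2 ^ (m - k) / INR (fact (m - k))))) k)).
  2:{ intros k Hk. unfold fshift.
      rewrite (CDerive_n_ext_on lo hi _ (fun t => sum_n (fun i =>
                (RtoC (s ^ i) * RtoC (c1 ^ (k - i) / INR (fact (k - i)))) *
                CDerive_n (F i) (k - i) t) k)) by (auto; intros t _; apply sum_n_ext; intros; to_C; ring).
      rewrite (CDerive_n_sum_n lo hi) by
        (auto; intros i; apply Csmooth_on_scal, Csmooth_on_CDerive_n, HF).
      rewrite pow1, Cmult_1_l, <- sum_n_Cmult_r. apply sum_n_ext_loc; intros i Hi.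
      rewrite (CDerive_n_scal lo hi), CDerive_n_comp by (auto; apply Csmooth_on_CDerive_n, HF).
      rewrite !RtoC_mult. to_C; ring. }
  rewrite (sum_n_triangle (fun i k => RtoC (s ^ i) * CDerive_n (F i) (m - k + (k - i)) x *
      RtoC (c1 ^ (k - i) / INR (fact (k - i)) * (c2 ^ (m - k) / INR (fact (m - k)))))).
  unfold fshift. apply sum_n_ext_loc; intros i Hi.
  rewrite (sum_n_ext_loc _ (fun j => (RtoC (s ^ i) * CDerive_n (F i) (m - i) x) *
       RtoC (c1 ^ j / INR (fact j) * (c2 ^ (m - i - j) / INR (fact (m - i - j)))))).
  2:{ intros j Hj. replace (m - (i + j) + (i + j - i))%nat with (m - i)%nat by lia.
      replace (i + j - i)%nat with j by lia. now replace (m - (i + j))%nat with (m - i - j)%nat by lia. }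
  rewrite sum_n_Cmult_l, <- RtoC_sum_n, sum_n_binomial_fact. reflexivity.
Qed.

End FormalShift.

Lemma alt_fshift F s c x m : alt (fun k => fshift F s c k x) m = fshift F (- s) (- c) m x.
Proof.
  unfold alt, fshift. rewrite <- sum_n_Cmult_l. apply sum_n_ext_loc; intros k Hk.
  replace ((-1) ^ m)%R with ((-1) ^ k * (-1) ^ (m - k))%R by (rewrite <- pow_add; f_equal; lia).
  replace (- s)%R with (-1 * s)%R by ring. replace (- c)%R with (-1 * c)%R by ring.
  rewrite !Rpow_mult_distr. unfold Rdiv. rewrite !RtoC_mult. to_C; ring.
Qed.

(* Evaluating the relation at [x + c eps], [c = - sg / 2], turns its two factors into
   [V(eps; x + c eps) + V(-eps; x - 3 sg eps / 2)] and [V(eps; x + c eps) + V(-eps; x - c eps)]. *)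
Lemma shifted_relation (lo hi : Rbar) (A Vl : fser) (l : C) (x sg : R) :
  fser_smooth lo hi A -> fser_smooth lo hi Vl -> in_open_int lo hi x -> (sg = 1 \/ sg = -1)%R ->
  (forall m y, in_open_int lo hi y ->
     fmul A (fmul (fadd Vl (fshift Vl (-1) (-1))) (fadd Vl (fshift Vl (-1) 1))) m y
     = fscal l (fsub (fmul Vl Vl) fone) m y) ->
  let a k := fshift A 1 (- sg / 2) k x in
  let v k := fshift Vl 1 (- sg / 2) k x in
  let w k := fshift Vl (-1) (- 3 * sg / 2) k x in
  forall m, cauchy a (cauchy (fun k => v k + w k) (fun k => v k + alt v k)) m
            = l * (cauchy v v m - one_seq m).
Proof.
  intros HA HV Hx Hsg Hrel a v w m.
  set (c := (- sg / 2)%R) in *.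
  set (P := fadd Vl (fshift Vl (-1) (-1))).
  set (Q := fadd Vl (fshift Vl (-1) 1)).
  assert (HP : fser_smooth lo hi P) by (apply fser_smooth_fadd, fser_smooth_fshift; auto).
  assert (HQ : fser_smooth lo hi Q) by (apply fser_smooth_fadd, fser_smooth_fshift; auto).
  assert (Hsh : forall c' j,
            fshift (fadd Vl (fshift Vl (-1) c')) 1 c j x = v j + fshift Vl (-1) (c' + c) j x).
  { intros c' j.
    rewrite (fshift_fadd lo hi _ _ _ _ _ _ HV (fser_smooth_fshift lo hi Vl (-1) c' HV) Hx).
    rewrite (fshift_fshift lo hi _ _ _ _ _ _ HV Hx). reflexivity. }
  assert (Halt : forall j, alt v j = fshift Vl (-1) (- c) j x).
  { intros j. unfold v. rewrite alt_fshift.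
    apply (f_equal (fun s => fshift Vl s (- c) j x)). ring. }
  transitivity (fshift (fscal l (fsub (fmul Vl Vl) fone)) 1 c m x).
  - rewrite <- (fshift_ext_on lo hi (fmul A (fmul P Q))) by auto.
    rewrite (fshift_fmul lo hi _ _ _ _ _ _ HA (fser_smooth_fmul lo hi _ _ HP HQ) Hx).
    rewrite fmul_cauchy. apply cauchy_ext; [reflexivity |]. intros k Hk.
    rewrite (fshift_fmul lo hi _ _ _ _ _ _ HP HQ Hx), fmul_cauchy.
    assert (Hc : forall c1 c2 j, c1 = c2 ->
              v j + fshift Vl (-1) c1 j x = v j + fshift Vl (-1) c2 j x) by (intros; now subst).
    destruct Hsg as [Hs | Hs]; [| rewrite (cauchy_comm (fun k => v k + w k))];
      apply cauchy_ext; intros j _; unfold P, Q; rewrite Hsh; try rewrite Halt; apply Hc;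
      unfold c; rewrite Hs; field.
  - assert (HVV := fser_smooth_fmul lo hi _ _ HV HV).
    rewrite (fshift_fscal lo hi _ _ _ _ _ _ (fser_smooth_fsub lo hi _ _ HVV (fser_smooth_fone lo hi)) Hx).
    rewrite (fshift_fsub lo hi _ _ _ _ _ _ HVV (fser_smooth_fone lo hi) Hx).
    rewrite (fshift_fmul lo hi _ _ _ _ _ _ HV HV Hx), fshift_fone.
    reflexivity.
Qed.

Lemma ext_dom_neq0 rc l : (0 < rc)%R -> ext_dom rc l -> l <> 0.
Proof. intros Hrc Hl ->. unfold ext_dom in Hl. rewrite Cmod_0 in Hl. lra. Qed.

Lemma is_wc_neq0 rc wc l : (0 < rc)%R -> is_wc rc wc -> ext_dom rc l -> wc l <> 0.
Proof.
  intros Hrc [Hsq _] Hl Hw. specialize (Hsq l Hl). rewrite Hw, Cmult_0_l in Hsq.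
  assert (Hl4 : l - RtoC (4 * rc) = 0).
  { apply (Cmult_eq_reg_r l); [| now apply (ext_dom_neq0 rc)]. rewrite Cmult_0_l, Hsq. ring. }
  assert (l = RtoC (4 * rc)) as ->.
  { replace l with (l - RtoC (4 * rc) + RtoC (4 * rc)) by ring. rewrite Hl4. ring. }
  unfold ext_dom in Hl. rewrite Cmod_R, Rabs_right in Hl; lra.
Qed.

Lemma l_div_wc_twice_neq0 rc wc l :
  (0 < rc)%R -> is_wc rc wc -> ext_dom rc l -> l / wc l + l / wc l <> 0.
Proof.
  intros Hrc Hwc Hl H.
  assert (Hw := is_wc_neq0 rc wc l Hrc Hwc Hl).
  assert (H2 : RtoC 2 <> 0) by (intros H2; apply RtoC_inj in H2; lra).
  apply (ext_dom_neq0 rc l Hrc Hl).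
  replace l with ((l / wc l + l / wc l) * wc l / 2) by (field; auto).
  rewrite H. field; auto.
Qed.

Theorem proposition1
  (rc : R) (wc : C -> C) (lo hi : Rbar)
  (a : nat -> R -> R) (V : nat -> C -> R -> C) :
  (0 < rc)%R ->
  is_wc rc wc ->
  (forall x, a 0%nat x = rc) ->
  (forall k, (1 <= k)%nat -> smooth_on lo hi (a k)) ->
  (forall k x, in_open_int lo hi x -> forall l, ext_dom rc l -> holo_at (fun z => V k z x) l) ->
  (forall k l, ext_dom rc l -> Csmooth_on lo hi (V k l)) ->
  (forall l x, ext_dom rc l -> V 0%nat l x = l / wc l) ->
  (forall l, ext_dom rc l ->
     let A : fser := fun k x => RtoC (a k x) in
     let Vl : fser := fun k x => V k l x in
     forall m x, in_open_int lo hi x ->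
       fmul A (fmul (fadd Vl (fshift Vl (-1) (-1)))
                    (fadd Vl (fshift Vl (-1) 1))) m x
       = fscal l (fsub (fmul Vl Vl) fone) m x) ->
  forall l, ext_dom rc l ->
    let A : fser := fun k x => RtoC (a k x) in
    let Vl : fser := fun k x => V k l x in
    forall sg : R, (sg = 1 \/ sg = -1)%R ->
    let E : fser :=
      fsub (fscal l (fshift Vl 1 (- sg / 2)))
           (fmul (fshift A 1 (- sg / 2))
                 (fadd (fshift Vl 1 (- sg / 2)) (fshift Vl (-1) (- 3 * sg / 2)))) in
    forall m x, in_open_int lo hi x -> Nat.odd m = true -> E m x = 0.
Proof.
  intros Hrc Hwc Ha0 Ha _ HV HV0 Hrel l Hl A Vl sg Hsg E m x Hx Hodd.
  assert (HA : fser_smooth lo hi A).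
  { intros [|k]; apply Csmooth_on_RtoC; [| apply Ha; lia].
    apply (smooth_on_ext lo hi (fun _ => rc)); [intros; now rewrite Ha0 | apply smooth_on_const]. }
  assert (HVl : fser_smooth lo hi Vl) by (intros k; now apply HV).
  apply (alt_fixed_odd (fun k => E k x)); [| exact Hodd].
  refine (alt_fixed_of_relation l _ _ _ _
            (shifted_relation lo hi A Vl l x sg HA HVl Hx Hsg (Hrel l Hl)) m).
  rewrite fshift_O. unfold Vl. rewrite HV0 by exact Hl.
  exact (l_div_wc_twice_neq0 rc wc l Hrc Hwc Hl).
Qed.
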